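(* Let $1\le i\le b$, let $n$ be a positive integer and $m,k$ non-negative integers. Then (1) $d_i(n+p-1)\ge q\,d_i(n)$; (2) $y_i(m+p-1,k)\ge q\,y_i(m,k)$; (3) $y_i(m+p-1)>q\,y_i(m)$.
   Context: Let $q=p^b$ with $p$ prime, $b\ge1$. Let $y\in\mathbb{Z}_p$ be written $y=\sum_{i=1}^b p^{i-1}y_i$ with $y_i=\sum_{j\ge0}y_{i,j}q^j$, $0\le y_{i,j}<p$. Assume $y$ is $q$-full: no $y_i$ is a non-negative integer (so $\sum_j y_{i,j}=\infty$). For $n\ge1$, $d_i(n)=p^{i-1}q^w$ where $w\ge0$ is the unique integer with $\sum_{j=0}^{w-1}y_{i,j}<n\le\sum_{j=0}^{w}y_{i,j}$. For $m\in\mathbb{Z}$, $y_i(m)=\sum_{n=1}^m d_i(n)$ (zero if $m\le0$), and $y_i(m,k)=y_i(m+k)-y_i(m)$. *)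

From Stdlib Require Import ClassicalEpsilon.
From mathcomp Require Import all_boot.
Set Implicit Arguments. Unset Strict Implicit. Unset Printing Implicit Defensive.

(* A p-adic integer y in Z_p is represented by its base-p digit sequence
   a : nat -> nat, with a t < p for all t, i.e. y = sum_t a t * p^t. *)
Definition is_digits (p : nat) (a : nat -> nat) : Prop := forall t, a t < p.

(* y_{i,j} : the j-th base-q digit (q = p^b) of y_i, where
   y = sum_{i=1}^b p^(i-1) y_i; this is the base-p digit of y at
   position (i-1) + b*j. *)
Definition ydig (b : nat) (a : nat -> nat) (i j : nat) : nat := a (i.-1 + b * j).

(* y is q-full: for each 1 <= i <= b, y_i is not a non-negative integer,
   i.e. infinitely many of its digits y_{i,j} are non-zero. *)
Definition q_full (b : nat) (a : nat -> nat) : Prop :=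
  forall i, 1 <= i <= b -> forall N, exists j, N <= j /\ ydig b a i j != 0.

Definition psum (b : nat) (a : nat -> nat) (i w : nat) : nat :=
  \sum_(j < w.+1) ydig b a i j.

(* w_i(n): the least w with n <= sum_{j<=w} y_{i,j}; for n >= 1 this is the
   unique w with sum_{j<w} y_{i,j} < n <= sum_{j<=w} y_{i,j}.
   (Default 0 if no such w exists, which cannot happen for q-full y.) *)
Definition wfun (b : nat) (a : nat -> nat) (i n : nat) : nat :=
  match excluded_middle_informative (exists w, n <= psum b a i w) with
  | left h => ex_minn h
  | right _ => 0
  end.

Definition d_fun (p b : nat) (a : nat -> nat) (i n : nat) : nat :=
  p ^ i.-1 * (p ^ b) ^ wfun b a i n.

Definition y_fun (p b : nat) (a : nat -> nat) (i m : nat) : nat :=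
  \sum_(1 <= n < m.+1) d_fun p b a i n.

(* y_i(m,k) = y_i(m+k) - y_i(m)  (non-negative, so truncated subtraction is exact) *)
Definition y2_fun (p b : nat) (a : nat -> nat) (i m k : nat) : nat :=
  y_fun p b a i (m + k) - y_fun p b a i m.

From mathcomp Require Import all_boot.
From mathcomp Require Import zify.
From Stdlib Require Import ClassicalEpsilon.

Set Implicit Arguments.
Unset Strict Implicit.
Unset Printing Implicit Defensive.

(* Let w(n) be the exponent of q in d_i(n) and S(w) = y_{i,0} + ... + y_{i,w}.
   By minimality of w(n), S(w(n) - 1) < n, and the digit y_{i,w(n)} is at most
   p - 1, so S(w(n)) < n + p - 1; hence w(n + p - 1) > w(n), which gives (1).
   Summing (1) termwise gives (2), and (3) is (2) at m = 0 plus the positive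
   term y_i(p - 1). *)

Section PartialDigitSums.

Variables (b : nat) (a : nat -> nat) (i : nat).

Local Notation ps := (psum b a i).
Local Notation w := (wfun b a i).

Lemma psumS v : ps v.+1 = ps v + ydig b a i v.+1.
Proof. by rewrite /psum big_ord_recr. Qed.

Lemma psum_homo : {homo ps : u v / u <= v}.
Proof. by apply: homo_leq => [//|u v x|v]; [exact: leq_trans | rewrite psumS leq_addr]. Qed.

Lemma q_full_psum_unbounded : q_full b a -> 1 <= i <= b ->
  forall N, exists v, N <= ps v.
Proof.
move=> full_a i_range; elim=> [|N [v le_N_psum]]; first by exists 0.
have [[|j] [lt_v_j ydig_neq0]] := full_a i i_range v.+1 => //.
exists j.+1; rewrite psumS; have /psum_homo := ltnSE lt_v_j; lia.
Qed.

Hypothesis psum_unbounded : forall N, exists v, N <= ps v.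

Lemma wfun_psum N : N <= ps (w N).
Proof.
rewrite /wfun; case: excluded_middle_informative => [ex_v|[]]; last exact: psum_unbounded.
by case: ex_minnP.
Qed.

Lemma wfun_min N v : N <= ps v -> w N <= v.
Proof.
rewrite /wfun; case: excluded_middle_informative => [ex_v|]; last by [].
by case: ex_minnP => u _; apply.
Qed.

Variable p : nat.
Hypothesis ydig_lt : forall j, ydig b a i j < p.

Lemma psum_wfun_lt n : 0 < n -> ps (w n) < n + p - 1.
Proof.
move=> n_gt0; case E: (w n) => [|v].
  by rewrite /psum big_ord1 /=; have := ydig_lt 0; lia.
have lt_psum_n : ps v < n.
  by rewrite ltnNge; apply/negP => /wfun_min; rewrite E ltnn.
by rewrite psumS; have := ydig_lt v.+1; lia.
Qed.

Lemma wfun_shift n : 0 < n -> w n < w (n + p - 1).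
Proof.
move=> n_gt0; rewrite ltnNge; apply/negP => /psum_homo le_psum.
by have := leq_trans (wfun_psum (n + p - 1)) le_psum; rewrite leqNgt psum_wfun_lt.
Qed.

End PartialDigitSums.

Section BlockSums.

Variables (p b : nat) (a : nat -> nat) (i : nat).
Hypothesis p_gt1 : 1 < p.

Local Notation d := (d_fun p b a i).
Local Notation y := (y_fun p b a i).
Local Notation y2 := (y2_fun p b a i).

Lemma d_fun_gt0 n : 0 < d n.
Proof. by rewrite /d_fun muln_gt0 !expn_gt0 ltnW. Qed.

Lemma d_fun_lt_wfun n n' : wfun b a i n < wfun b a i n' -> p ^ b * d n <= d n'.
Proof.
move=> lt_w; rewrite /d_fun mulnCA -expnS leq_mul //.
by rewrite leq_pexp2l // expn_gt0 ltnW.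
Qed.

Lemma y_fun0 : y 0 = 0.
Proof. by rewrite /y_fun big_geq. Qed.

Lemma y_funS m : y m.+1 = y m + d m.+1.
Proof. by rewrite /y_fun big_nat_recr. Qed.

Lemma y_funD m k : y (m + k) = y m + \sum_(j < k) d (m + j.+1).
Proof.
elim: k => [|k IHk]; first by rewrite addn0 big_ord0 addn0.
by rewrite addnS y_funS IHk big_ord_recr /= addnS addnA.
Qed.

Lemma y2_funE m k : y2 m k = \sum_(j < k) d (m + j.+1).
Proof. by rewrite /y2_fun y_funD addKn. Qed.

Lemma y2_fun0l k : y2 0 k = y k.
Proof. by rewrite y2_funE -[k]add0n y_funD y_fun0. Qed.

Lemma y_fun_split m k : y (m + k) = y m + y2 m k.
Proof. by rewrite y2_funE y_funD. Qed.

Lemma y_fun_gt0 m : 0 < m -> 0 < y m.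
Proof. by case: m => // m _; rewrite y_funS addn_gt0 d_fun_gt0 orbT. Qed.

Hypothesis d_fun_shift : forall n, 0 < n -> p ^ b * d n <= d (n + p - 1).

Lemma y2_fun_shift m k : p ^ b * y2 m k <= y2 (m + p - 1) k.
Proof.
rewrite !y2_funE big_distrr leq_sum // => j _.
have -> : m + p - 1 + j.+1 = m + j.+1 + p - 1 by lia.
by apply: d_fun_shift; rewrite addnS.
Qed.

Lemma y_fun_shift m : p ^ b * y m < y (m + p - 1).
Proof.
have -> : m + p - 1 = (p - 1) + m by lia.
rewrite y_fun_split -add1n leq_add ?y_fun_gt0 ?subn_gt0 //.
by have := y2_fun_shift 0 m; rewrite y2_fun0l.
Qed.

End BlockSums.

Theorem lemma6p5 (p b : nat) (a : nat -> nat) (i n m k : nat) :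
  prime p -> 1 <= b -> is_digits p a -> q_full b a ->
  1 <= i <= b -> 0 < n ->
  [/\ d_fun p b a i (n + p - 1) >= p ^ b * d_fun p b a i n,
      y2_fun p b a i (m + p - 1) k >= p ^ b * y2_fun p b a i m k
    & y_fun p b a i (m + p - 1) > p ^ b * y_fun p b a i m].
Proof.
move=> p_prime _ digits_a full_a i_range n_gt0.
have p_gt1 := prime_gt1 p_prime.
have psum_unbounded := q_full_psum_unbounded full_a i_range.
have ydig_lt j : ydig b a i j < p by apply: digits_a.
have d_shift n' : 0 < n' -> p ^ b * d_fun p b a i n' <= d_fun p b a i (n' + p - 1).
  by move=> n'_gt0; apply/(d_fun_lt_wfun p_gt1)/(wfun_shift psum_unbounded ydig_lt).
split; [exact: d_shift | exact: (y2_fun_shift p_gt1 d_shift) | exact: (y_fun_shift p_gt1 d_shift)].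
Qed.
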